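(* Let $\mathcal{U}\subseteq\mathcal{E}$ be a dead-ending universe and let $\mathcal{A}$ be the set of Left ends of $\mathcal{U}$. Then for every Left dead-end $G$ the following are equivalent: (i) $G\notin\operatorname{up}(\mathcal{A})$; (ii) $G^\circ$ is Left $\mathcal{U}$-strong; (iii) $G^{\circledast}\geq_\mathcal{U} 0$.
   Context: All games are finite partizan games; $\cong$ is identity of game trees; $o(G)$ is the misère outcome class, ordered $\mathscr{L} > \mathscr{N} > \mathscr{R}$, $\mathscr{L} > \mathscr{P} > \mathscr{R}$. A universe is a set of games closed under options, disjunctive sums, conjugates, and forming $\{\mathscr{G}^L\mid\mathscr{G}^R\}$ from nonempty finite subsets of it. For a universe $\mathcal{U}$ and arbitrary games $G,H$, $G\geq_\mathcal{U} H$ means $o(G+X)\geq o(H+X)$ for all $X\in\mathcal{U}$. A Left (Right) end is a game with no Left (Right) option; a Left dead-end is a game all of whose subpositions are Left ends, and similarly for Right; $\mathcal{L}$ denotes the set of Left dead-ends. $\mathcal{E}$ is the set of games in which every subposition that is an end is a (Left or Right) dead-end; a universe contained in $\mathcal{E}$ is dead-ending. For Left dead-ends, $G\geq H$ means $G\geq_\mathcal{V} H$ for every universe $\mathcal{V}$. For a set $\mathcal{A}$ of Left dead-ends, $\operatorname{cl}(\mathcal{A})$ is the smallest set containing $\mathcal{A}$ closed under options and sums, and $\operatorname{up}(\mathcal{A})=\{G\in\mathcal{L}: G\geq H\text{ for some }H\in\operatorname{cl}(\mathcal{A})\}$. $G$ is Left $\mathcal{U}$-strong if $o(G+X)\geq\mathscr{N}$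 for every Left end $X\in\mathcal{U}$. For a Left dead-end $G$: the adjoint is $G^\circ=*=\{0\mid 0\}$ if $G\cong 0$, and $G^\circ=\{(G^R)^\circ\mid 0\}$ otherwise ($G^R$ ranging over Right options of $G$); the Left-modified adjoint is $G^{\circledast}=\{0\mid *\}$ if $G\cong 0$ and $G^{\circledast}=\{(G^R)^\circ\mid *\}$ otherwise. *)

From Stdlib Require Import List.
Import ListNotations.

Inductive game : Type := Game : list game -> list game -> game.

Definition lefts (g : game) : list game := match g with Game l _ => l end.
Definition rights (g : game) : list game := match g with Game _ r => r end.

Definition zero : game := Game [] [].
Definition star : game := Game [zero] [zero].

Inductive ident : game -> game -> Prop :=
| ident_intro gl gr hl hr :
    (forall x, In x gl -> exists y, In y hl /\ ident x y) ->
    (forall y, In y hl -> exists x, In x gl /\ ident x y) ->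
    (forall x, In x gr -> exists y, In y hr /\ ident x y) ->
    (forall y, In y hr -> exists x, In x gr /\ ident x y) ->
    ident (Game gl gr) (Game hl hr).

Fixpoint add (g h : game) {struct g} : game :=
  match g with
  | Game gl gr =>
      (fix addh (h : game) : game :=
         match h with
         | Game hl hr =>
             Game (map (fun x => add x h) gl ++ map addh hl)
                  (map (fun x => add x h) gr ++ map addh hr)
         end) h
  end.

Fixpoint conj (g : game) : game :=
  match g with Game l r => Game (map conj r) (map conj l) end.

(** Misère play: the player unable to move wins.
    lwin g : Left wins g moving first;  rwin g : Right wins g moving first. *)
Fixpoint lwin (g : game) : bool :=
  match g with
  | Game ls _ => match ls with
                 | [] => true
                 | _ => existsb (fun x => negb (rwin x)) ls
                 end
  end
with rwin (g : game) : bool :=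
  match g with
  | Game _ rs => match rs with
                 | [] => true
                 | _ => existsb (fun x => negb (lwin x)) rs
                 end
  end.

Inductive outcome : Type := OL | ON | OP | OR.

Definition o (g : game) : outcome :=
  match lwin g, rwin g with
  | true, false => OL
  | true, true => ON
  | false, false => OP
  | false, true => OR
  end.

Definition outcome_ge (a b : outcome) : bool :=
  match a, b with
  | OL, _ => true
  | _, OR => true
  | ON, ON => true
  | OP, OP => true
  | _, _ => false
  end.

Definition universe (U : game -> Prop) : Prop :=
  (forall g h, U g -> ident g h -> U h) /\
  (forall g x, U g -> In x (lefts g) -> U x) /\
  (forall g x, U g -> In x (rights g) -> U x) /\
  (forall g h, U g -> U h -> U (add g h)) /\
  (forall g, U g -> U (conj g)) /\
  (forall l r, l <> [] -> r <> [] ->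
     (forall x, In x l -> U x) -> (forall x, In x r -> U x) -> U (Game l r)).

Definition geU (U : game -> Prop) (g h : game) : Prop :=
  forall X, U X -> outcome_ge (o (add g X)) (o (add h X)) = true.

Inductive subpos : game -> game -> Prop :=
| subpos_refl g : subpos g g
| subpos_left g x s : In x (lefts g) -> subpos x s -> subpos g s
| subpos_right g x s : In x (rights g) -> subpos x s -> subpos g s.

Definition left_end (g : game) : Prop := lefts g = [].
Definition right_end (g : game) : Prop := rights g = [].

Definition left_dead_end (g : game) : Prop := forall s, subpos g s -> left_end s.
Definition right_dead_end (g : game) : Prop := forall s, subpos g s -> right_end s.

Definition in_E (g : game) : Prop :=
  forall s, subpos g s -> (left_end s \/ right_end s) ->
            left_dead_end s \/ right_dead_end s.

(** For Left dead-ends: G >= H iff G >=_V H for every universe V. *)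
Definition dge (g h : game) : Prop :=
  forall V, universe V -> geU V g h.

Inductive cl (A : game -> Prop) : game -> Prop :=
| cl_base g : A g -> cl A g
| cl_left g x : cl A g -> In x (lefts g) -> cl A x
| cl_right g x : cl A g -> In x (rights g) -> cl A x
| cl_add g h : cl A g -> cl A h -> cl A (add g h).

Definition up (A : game -> Prop) (g : game) : Prop :=
  left_dead_end g /\ exists h, cl A h /\ dge g h.

Definition left_strong (U : game -> Prop) (g : game) : Prop :=
  forall X, U X -> left_end X -> outcome_ge (o (add g X)) ON = true.

Fixpoint adjoint (g : game) : game :=
  match g with
  | Game [] [] => star
  | Game _ rs => Game (map adjoint rs) [zero]
  end.

Definition ladjoint (g : game) : game :=
  match g with
  | Game [] [] => Game [zero] [star]
  | Game _ rs => Game (map adjoint rs) [star]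
  end.

(* Every outcome comparison below is an instance of one simulation principle: a relation
   that lets Left copy every Left move of [b] in [a] and every Right move of [a] in [b]
   (or reverse it back to [b]) yields o(a) >= o(b).

   If Left loses G° + X moving first for a Left dead end X, then unwinding the Left moves
   of G° = {(G^R)° | 0} shows that every G^R is matched by some X^R with the same
   property, which forces G >= X; a losing Left end X of U thus puts G in up(A).
   Conversely Left always loses G + G° moving first, so G >= H with H in cl(A) makes
   Left lose H + G° as well, and such an H is a Left end of U.
   Finally G^⊛ and G° have the same Left options, so they agree against Left ends;
   the extra Right move of G^⊛ to * is reversed by Left moving back to 0, which makes
   G^⊛ + X at least as good as X for every X in U once G° is Left U-strong. *)

From Stdlib Require Import List Bool.
Import ListNotations.

Lemma game_ind_In (P : game -> Prop) :
  (forall l r, (forall x, In x l -> P x) -> (forall x, In x r -> P x) -> P (Game l r)) ->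
  forall g, P g.
Proof.
  intros H. fix IH 1. intros [l r]. apply H.
  - induction l as [|y l IHl]; intros x Hx; [contradiction|].
    destruct Hx as [<-|Hx]; [apply IH|exact (IHl x Hx)].
  - induction r as [|y r IHr]; intros x Hx; [contradiction|].
    destruct Hx as [<-|Hx]; [apply IH|exact (IHr x Hx)].
Qed.

Lemma lwin_iff g :
  lwin g = true <-> lefts g = [] \/ exists x, In x (lefts g) /\ rwin x = false.
Proof.
  destruct g as [[|y l] r]; cbn [lwin lefts]; [tauto|].
  rewrite existsb_exists. setoid_rewrite negb_true_iff.
  split; [intros (x & Hx & Hr); eauto | intros [[=] | H]; exact H].
Qed.

Lemma rwin_iff g :
  rwin g = true <-> rights g = [] \/ exists x, In x (rights g) /\ lwin x = false.
Proof.
  destruct g as [l [|y r]]; cbn [rwin rights]; [tauto|].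
  rewrite existsb_exists. setoid_rewrite negb_true_iff.
  split; [intros (x & Hx & Hl); eauto | intros [[=] | H]; exact H].
Qed.

Lemma lwin_false_inv g x : lwin g = false -> In x (lefts g) -> rwin x = true.
Proof.
  intros Hg Hx. apply not_false_iff_true. intros Hr.
  rewrite <- not_true_iff_false, lwin_iff in Hg. eauto.
Qed.

Lemma rwin_false_inv g x : rwin g = false -> In x (rights g) -> lwin x = true.
Proof.
  intros Hg Hx. apply not_false_iff_true. intros Hl.
  rewrite <- not_true_iff_false, rwin_iff in Hg. eauto.
Qed.

Lemma lwin_left_end g : left_end g -> lwin g = true.
Proof. intros H. apply lwin_iff. now left. Qed.

Lemma lwin_eq_of_lefts g h : lefts g = lefts h -> lwin g = lwin h.
Proof. destruct g as [l r], h as [l' r']. simpl. intros ->. reflexivity. Qed.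

Lemma outcome_ge_intro a b :
  (lwin b = true -> lwin a = true) -> (rwin a = true -> rwin b = true) ->
  outcome_ge (o a) (o b) = true.
Proof. unfold o. destruct (lwin a), (rwin a), (lwin b), (rwin b); intuition congruence. Qed.

Lemma outcome_ge_lwin a b : outcome_ge (o a) (o b) = true -> lwin b = true -> lwin a = true.
Proof. unfold o. destruct (lwin a), (rwin a), (lwin b), (rwin b); simpl; congruence. Qed.

Lemma outcome_ge_ON a : outcome_ge (o a) ON = true <-> lwin a = true.
Proof. unfold o. destruct (lwin a), (rwin a); simpl; intuition congruence. Qed.

Lemma lefts_add g h : lefts (add g h) = map (fun x => add x h) (lefts g) ++ map (add g) (lefts h).
Proof. destruct g, h. reflexivity. Qed.

Lemma rights_add g h : rights (add g h) = map (fun x => add x h) (rights g) ++ map (add g) (rights h).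
Proof. destruct g, h. reflexivity. Qed.

Lemma In_lefts_add z g h :
  In z (lefts (add g h)) <->
  (exists x, In x (lefts g) /\ z = add x h) \/ (exists y, In y (lefts h) /\ z = add g y).
Proof.
  rewrite lefts_add, in_app_iff, !in_map_iff.
  split; intros [(x & Hz & Hx) | (x & Hz & Hx)]; subst; eauto.
Qed.

Lemma In_rights_add z g h :
  In z (rights (add g h)) <->
  (exists x, In x (rights g) /\ z = add x h) \/ (exists y, In y (rights h) /\ z = add g y).
Proof.
  rewrite rights_add, in_app_iff, !in_map_iff.
  split; intros [(x & Hz & Hx) | (x & Hz & Hx)]; subst; eauto.
Qed.

Lemma lefts_add_nil g h : lefts (add g h) = [] <-> lefts g = [] /\ lefts h = [].
Proof.
  rewrite lefts_add. split.
  - intros [Hg Hh]%app_eq_nil. split; eapply map_eq_nil; eassumption.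
  - intros [-> ->]. reflexivity.
Qed.

Lemma rights_add_nil g h : rights (add g h) = [] <-> rights g = [] /\ rights h = [].
Proof.
  rewrite rights_add. split.
  - intros [Hg Hh]%app_eq_nil. split; eapply map_eq_nil; eassumption.
  - intros [-> ->]. reflexivity.
Qed.

Section Simulation.

Variable R : game -> game -> Prop.

Hypothesis R_left_end : forall a b, R a b -> left_end b -> lwin a = true.
Hypothesis R_lefts : forall a b, R a b -> forall b', In b' (lefts b) ->
  (exists a', In a' (lefts a) /\ R a' b') \/ In a (rights b').
Hypothesis R_right_end : forall a b, R a b -> right_end a -> rwin b = true.
Hypothesis R_rights : forall a b, R a b -> forall a', In a' (rights a) ->
  (exists b', In b' (rights b) /\ R a' b') \/ In b (lefts a').

Lemma simulation_win a : forall b, R a b ->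
  (lwin b = true -> lwin a = true) /\ (rwin a = true -> rwin b = true).
Proof.
  induction a as [l r IHl IHr] using game_ind_In. intros b Hab. split.
  - intros Hb. apply lwin_iff in Hb as [Hb | (b' & Hb' & Hr)]; [eauto|].
    destruct (R_lefts _ _ Hab _ Hb') as [(a' & Ha' & Hab') | Hrev].
    + apply lwin_iff. right. exists a'. split; [exact Ha'|].
      apply not_true_iff_false. intros Ha'r.
      rewrite (proj2 (IHl a' Ha' b' Hab') Ha'r) in Hr. discriminate.
    + exact (rwin_false_inv _ _ Hr Hrev).
  - intros Ha. apply rwin_iff in Ha as [Ha | (a' & Ha' & Hl)]; [eauto|].
    destruct (R_rights _ _ Hab _ Ha') as [(b' & Hb' & Hab') | Hrev].
    + apply rwin_iff. right. exists b'. split; [exact Hb'|].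
      apply not_true_iff_false. intros Hb'l.
      rewrite (proj1 (IHr a' Ha' b' Hab') Hb'l) in Hl. discriminate.
    + exact (lwin_false_inv _ _ Hl Hrev).
Qed.

Lemma simulation_outcome_ge a b : R a b -> outcome_ge (o a) (o b) = true.
Proof. intros Hab. apply outcome_ge_intro; apply (simulation_win a b Hab). Qed.

End Simulation.

Lemma add_comm_outcome_ge g h : outcome_ge (o (add g h)) (o (add h g)) = true.
Proof.
  apply (simulation_outcome_ge (fun a b => exists x y, a = add x y /\ b = add y x));
    [ intros a b (x & y & -> & ->) .. | eauto ].
  - intros Hb. apply lwin_left_end. unfold left_end in *.
    rewrite lefts_add_nil in *. tauto.
  - intros b' Hb'. left. apply In_lefts_add in Hb' as [(y' & Hy' & ->) | (x' & Hx' & ->)].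
    + exists (add x y'). split; [apply In_lefts_add; eauto | eauto].
    + exists (add x' y). split; [apply In_lefts_add; eauto | eauto].
  - intros Ha. apply rwin_iff. left. unfold right_end in *.
    rewrite rights_add_nil in *. tauto.
  - intros a' Ha'. left. apply In_rights_add in Ha' as [(x' & Hx' & ->) | (y' & Hy' & ->)].
    + exists (add y x'). split; [apply In_rights_add; eauto | eauto].
    + exists (add y' x). split; [apply In_rights_add; eauto | eauto].
Qed.

Inductive ldead : game -> Prop :=
  ldead_intro g : left_end g -> (forall x, In x (rights g) -> ldead x) -> ldead g.

Lemma ldead_of_left_dead_end g : left_dead_end g -> ldead g.
Proof.
  induction g as [l r _ IHr] using game_ind_In. intros H.
  constructor; [exact (H _ (subpos_refl _))|].
  intros x Hx. apply IHr; [exact Hx|].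
  intros s Hs. apply H. eapply subpos_right; eassumption.
Qed.

Lemma ldead_add g h : ldead g -> ldead h -> ldead (add g h).
Proof.
  intros Hg. revert h. induction Hg as [g Hgl _ IHg]. intros h Hh.
  induction Hh as [h Hhl Hhr IHh]. constructor.
  - apply lefts_add_nil. split; assumption.
  - intros z Hz. apply In_rights_add in Hz as [(x & Hx & ->) | (y & Hy & ->)].
    + apply IHg; [exact Hx|]. constructor; assumption.
    + apply IHh, Hy.
Qed.

Inductive dead_end_ge : game -> game -> Prop :=
| dead_end_ge_zero : dead_end_ge zero zero
| dead_end_ge_rights r x : r <> [] -> left_end x ->
    (forall g', In g' r -> exists x', In x' (rights x) /\ dead_end_ge g' x') ->
    dead_end_ge (Game [] r) x.

Lemma dead_end_ge_outcome g x y :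
  dead_end_ge g x -> outcome_ge (o (add g y)) (o (add x y)) = true.
Proof.
  intros Hgx.
  apply (simulation_outcome_ge
           (fun a b => exists g x y, dead_end_ge g x /\ a = add g y /\ b = add x y));
    [ intros a b (g' & x' & y' & Hge & -> & ->) .. | eauto 6 ].
  - unfold left_end. rewrite lefts_add_nil. intros [_ Hy].
    apply lwin_left_end, lefts_add_nil. destruct Hge; auto.
  - intros b' Hb'. left.
    apply In_lefts_add in Hb' as [(x'' & Hx'' & ->) | (y'' & Hy'' & ->)].
    + destruct Hge as [|? ? _ Hxl _]; [destruct Hx'' | rewrite Hxl in Hx''; destruct Hx''].
    + exists (add g' y''). split; [apply In_lefts_add; eauto | eauto 6].
  - unfold right_end. rewrite rights_add_nil. intros [Hg' Hy].
    apply rwin_iff. left. apply rights_add_nil. split; [|exact Hy].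
    destruct Hge as [|? ? Hr _ _]; [reflexivity | contradiction].
  - intros a' Ha'. left.
    apply In_rights_add in Ha' as [(g'' & Hg'' & ->) | (y'' & Hy'' & ->)].
    + destruct Hge as [|? ? _ _ Hsim]; [destruct Hg''|].
      destruct (Hsim g'' Hg'') as (x'' & Hx'' & Hge'').
      exists (add x'' y'). split; [apply In_rights_add; eauto | eauto 6].
    + exists (add x' y''). split; [apply In_rights_add; eauto | eauto 6].
Qed.

Lemma adjoint_nonempty r : r <> [] -> adjoint (Game [] r) = Game (map adjoint r) [zero].
Proof. destruct r; [contradiction | reflexivity]. Qed.

Lemma rights_adjoint g : rights (adjoint g) = [zero].
Proof. destruct g as [[|] [|]]; reflexivity. Qed.

Lemma lwin_add_adjoint g : ldead g -> lwin (add g (adjoint g)) = false.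
Proof.
  induction 1 as [[l r] Hl _ IH]. unfold left_end in Hl. cbn [lefts rights] in *. subst l.
  destruct r as [|g0 r]; [reflexivity|].
  rewrite adjoint_nonempty by discriminate.
  apply not_true_iff_false. intros [Hnil | (z & Hz & Hrz)]%lwin_iff.
  - apply lefts_add_nil in Hnil as [_ [=]].
  - apply In_lefts_add in Hz as [(? & [] & _) | (y & Hy & ->)].
    apply in_map_iff in Hy as (g' & <- & Hg').
    rewrite <- not_true_iff_false in Hrz. apply Hrz, rwin_iff. right.
    exists (add g' (adjoint g')). split; [apply In_rights_add; eauto | auto].
Qed.

Lemma dead_end_ge_of_adjoint g x :
  ldead g -> ldead x -> lwin (add (adjoint g) x) = false -> dead_end_ge g x.
Proof.
  intros Hg. revert x.
  induction Hg as [[l r] Hl _ IH]. unfold left_end in Hl. cbn [lefts rights] in *. subst l.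
  intros x Hx Hlose. destruct Hx as [x Hxl Hxr].
  destruct r as [|g0 r].
  - assert (Hr : rwin (add zero x) = true).
    { apply (lwin_false_inv _ _ Hlose), In_lefts_add. left. exists zero. split; [left|]; reflexivity. }
    apply rwin_iff in Hr as [Hnil | (z & Hz & Hlz)].
    + apply rights_add_nil in Hnil as [_ Hnil].
      destruct x as [xl xr]. unfold left_end in Hxl. cbn [lefts rights] in *. subst. constructor.
    + exfalso. apply In_rights_add in Hz as [(? & [] & _) | (x' & Hx' & ->)].
      rewrite lwin_left_end in Hlz; [discriminate|].
      apply lefts_add_nil. split; [reflexivity|]. destruct (Hxr x' Hx'); assumption.
  - rewrite adjoint_nonempty in Hlose by discriminate.
    constructor; [discriminate | exact Hxl |].
    intros g' Hg'.
    assert (Hr : rwin (add (adjoint g') x) = true).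
    { apply (lwin_false_inv _ _ Hlose), In_lefts_add. left.
      exists (adjoint g'). split; [apply in_map, Hg' | reflexivity]. }
    apply rwin_iff in Hr as [Hnil | (z & Hz & Hlz)].
    + apply rights_add_nil in Hnil as [Hnil _]. rewrite rights_adjoint in Hnil. discriminate.
    + apply In_rights_add in Hz as [(z' & Hz' & ->) | (x' & Hx' & ->)].
      * rewrite rights_adjoint in Hz'. destruct Hz' as [<-|[]].
        rewrite lwin_left_end in Hlz; [discriminate|]. apply lefts_add_nil. auto.
      * exists x'. split; [exact Hx'|]. apply IH; auto.
Qed.

Lemma universe_full : universe (fun _ => True).
Proof. repeat split; auto. Qed.

Lemma lwin_add_ladjoint g x :
  left_end x -> lwin (add (ladjoint g) x) = lwin (add (adjoint g) x).
Proof.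
  intros Hx. apply lwin_eq_of_lefts. rewrite !lefts_add, Hx.
  destruct g as [[|] [|]]; reflexivity.
Qed.

Lemma rights_ladjoint g : rights (ladjoint g) = [star].
Proof. destruct g as [[|] [|]]; reflexivity. Qed.

Definition left_ends (U : game -> Prop) (x : game) : Prop := U x /\ left_end x.

Section DeadEndingUniverse.

Variable U : game -> Prop.
Hypothesis U_lefts : forall g x, U g -> In x (lefts g) -> U x.
Hypothesis U_rights : forall g x, U g -> In x (rights g) -> U x.
Hypothesis U_add : forall g h, U g -> U h -> U (add g h).
Hypothesis U_dead_ending : forall g, U g -> in_E g.

Lemma ldead_of_left_ends x : left_ends U x -> ldead x.
Proof.
  intros [Hx Hxl].
  destruct (U_dead_ending x Hx x (subpos_refl _) (or_introl Hxl)) as [Hdead | Hdead].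
  - apply ldead_of_left_dead_end, Hdead.
  - constructor; [exact Hxl|]. rewrite (Hdead x (subpos_refl _)). intros ? [].
Qed.

Lemma cl_left_ends g : cl (left_ends U) g -> U g /\ ldead g.
Proof.
  induction 1 as [g Hg | g x _ [_ Hgl] Hx | g x _ [Hg Hgl] Hx | g h _ [Hg Hgl] _ [Hh Hhl]].
  - split; [apply Hg | apply ldead_of_left_ends, Hg].
  - destruct Hgl as [g Hgl _]. rewrite Hgl in Hx. destruct Hx.
  - split; [eauto|]. destruct Hgl as [g _ Hgr]. apply Hgr, Hx.
  - split; [auto | apply ldead_add; assumption].
Qed.

Lemma left_strong_of_not_up g :
  left_dead_end g -> ~ up (left_ends U) g -> left_strong U (adjoint g).
Proof.
  intros Hg Hnup x Hx Hxl. apply outcome_ge_ON.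
  destruct (lwin (add (adjoint g) x)) eqn:Hlose; [reflexivity|]. exfalso.
  assert (Hge : dead_end_ge g x).
  { apply dead_end_ge_of_adjoint; [apply ldead_of_left_dead_end, Hg | apply ldead_of_left_ends; split | ];
    assumption. }
  apply Hnup. split; [exact Hg|].
  exists x. split; [apply cl_base; split; assumption|].
  intros V _ y _. apply dead_end_ge_outcome, Hge.
Qed.

Lemma not_up_of_left_strong g : left_strong U (adjoint g) -> ~ up (left_ends U) g.
Proof.
  intros Hstrong [Hg (h & Hh & Hgh)].
  destruct (cl_left_ends h Hh) as [HUh Hhdead].
  assert (Hwin : lwin (add (adjoint g) h) = true).
  { apply outcome_ge_ON, Hstrong; [exact HUh | destruct Hhdead; assumption]. }
  apply (outcome_ge_lwin _ _ (add_comm_outcome_ge h (adjoint g))) in Hwin.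
  apply (outcome_ge_lwin _ _ (Hgh _ universe_full (adjoint g) I)) in Hwin.
  rewrite lwin_add_adjoint in Hwin; [discriminate|].
  apply ldead_of_left_dead_end, Hg.
Qed.

Lemma ladjoint_geU_zero g : left_strong U (adjoint g) -> geU U (ladjoint g) zero.
Proof.
  intros Hstrong x Hx.
  apply (simulation_outcome_ge
           (fun a b => exists x, U x /\ a = add (ladjoint g) x /\ b = add zero x));
    [ intros a b (y & Hy & -> & ->) .. | eauto ].
  - intros [_ Hyl]%lefts_add_nil.
    rewrite lwin_add_ladjoint by exact Hyl. apply outcome_ge_ON, Hstrong; assumption.
  - intros b' Hb'. left. apply In_lefts_add in Hb' as [(? & [] & _) | (y' & Hy' & ->)].
    exists (add (ladjoint g) y'). split; [apply In_lefts_add; eauto | eauto].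
  - unfold right_end. rewrite rights_add_nil, rights_ladjoint. intros [[=] _].
  - intros a' Ha'. apply In_rights_add in Ha' as [(s & Hs & ->) | (y' & Hy' & ->)].
    + right. rewrite rights_ladjoint in Hs. destruct Hs as [<-|[]].
      apply In_lefts_add. left. exists zero. split; [left|]; reflexivity.
    + left. exists (add zero y'). split; [apply In_rights_add; eauto | eauto].
Qed.

Lemma left_strong_of_ladjoint_geU g : geU U (ladjoint g) zero -> left_strong U (adjoint g).
Proof.
  intros Hge x Hx Hxl. apply outcome_ge_ON. rewrite <- lwin_add_ladjoint by exact Hxl.
  apply (outcome_ge_lwin _ _ (Hge x Hx)), lwin_left_end, lefts_add_nil.
  split; [reflexivity | exact Hxl].
Qed.

End DeadEndingUniverse.

Theorem mainTheorem3 (U : game -> Prop) (HU : universe U)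
  (HUE : forall g, U g -> in_E g) (G : game) (HG : left_dead_end G) :
  (~ up (fun X => U X /\ left_end X) G <-> left_strong U (adjoint G)) /\
  (left_strong U (adjoint G) <-> geU U (ladjoint G) zero).
Proof.
  destruct HU as (_ & U_lefts & U_rights & U_add & _ & _).
  split; split.
  - exact (left_strong_of_not_up U HUE G HG).
  - exact (not_up_of_left_strong U U_rights U_add HUE G).
  - exact (ladjoint_geU_zero U U_lefts U_rights G).
  - exact (left_strong_of_ladjoint_geU U G).
Qed.
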